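(* Let $X$ be a normed space over $F\in\{\mathbb{R},\mathbb{C}\}$ with $\dim X\geq\kappa\geq\aleph_0$, let $Z$ be a linear subspace of $X$, $Cl(Z)$ its closure in $X$, and $e:Cl(Z)\hookrightarrow X$ the inclusion. If the induced quotient shape morphism $S_{\kappa^-}(e):Cl(Z)\to X$ is an isomorphism of $Sh_{\kappa^-}(\mathcal{N})$, then for every Banach space $Y$ over $F$ with $\dim Y<\kappa$, every continuous linear map $f:Z\to Y$ admits a continuous linear extension $\bar f:X\to Y$; moreover $\|\bar f\|=\|f\|$.
   Context: $\dim$ is algebraic (Hamel) dimension. $\mathcal{N}$ is the category of normed spaces over $F$ with continuous linear maps and $\mathcal{N}_{\kappa^-}$ its full subcategory of spaces of dimension $<\kappa$. An $\mathcal{N}_{\kappa^-}$-expansion of a normed space $X$ is a family $\boldsymbol{p}=(p_\lambda:X\to X_\lambda)_{\lambda\in\Lambda}$ of continuous linear maps into an inverse system $\boldsymbol{X}=(X_\lambda,p_{\lambda\lambda'},\Lambda)$ in $\mathcal{N}_{\kappa^-}$ over a directed set, with $p_{\lambda\lambda'}p_{\lambda'}=p_\lambda$, such that (E1) every continuous linear $h:X\to P$ with $P\in\mathcal{N}_{\kappa^-}$ factors as $h=gp_\lambda$, and (E2) $gp_\lambda=g'p_\lambda$ implies $gp_{\lambda\lambda'}=g'p_{\lambda\lambda'}$ for some $\lambda'\ge\lambda$. The quotient shape category $Sh_{\kappa^-}(\mathcal{N})$ has normed spaces as objects and as morphisms $X\to Y$ the pro-$\mathcal{N}_{\kappa^-}$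 morphisms between the systems of chosen expansions of $X$ and $Y$ (expansions of a space being canonically isomorphic). The shape functor sends a continuous linear $e:X\to Y$ to $S_{\kappa^-}(e)$, the class of the unique pro-morphism $\boldsymbol{e}$ with $\boldsymbol{e}\boldsymbol{p}=\boldsymbol{q}e$. *)

From mathcomp Require Import all_boot all_order all_algebra.
From mathcomp Require Import all_classical all_reals all_analysis.

Export numFieldNormedType.Exports.

Set Implicit Arguments.
Unset Strict Implicit.
Unset Printing Implicit Defensive.
Import Order.TTheory GRing.Theory Num.Theory.
Local Open Scope classical_set_scope.
Local Open Scope ring_scope.

Section LinearAlgebra.
Variable K : numFieldType.

Definition lin_subspace (V : lmodType K) (Z : set V) : Prop :=
  Z 0 /\ forall (a : K) x y, Z x -> Z y -> Z (a *: x + y).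

Definition linear_on (V W : lmodType K) (S : set V) (h : V -> W) : Prop :=
  forall (a : K) x y, S x -> S y -> h (a *: x + y) = a *: h x + h y.

Definition hamel_free (V : lmodType K) (B : set V) : Prop :=
  forall (s : seq V) (c : V -> K), uniq s -> (forall v, v \in s -> B v) ->
    \sum_(v <- s) c v *: v = 0 -> forall v, v \in s -> c v = 0.

Definition hamel_spans (V : lmodType K) (B : set V) : Prop :=
  forall x : V, exists (s : seq V) (c : V -> K),
    (forall v, v \in s -> B v) /\ x = \sum_(v <- s) c v *: v.

Definition hamel_basis (V : lmodType K) (B : set V) : Prop :=
  hamel_free B /\ hamel_spans B.

(** The cardinal kappa is represented by a set [k : set Tk].
    dim V < kappa, and dim V >= kappa (Hamel dimension). *)
Definition dim_lt (V : lmodType K) (Tk : Type) (k : set Tk) : Prop :=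
  exists B : set V, hamel_basis B /\ (B #<= k)%card /\ ~ (k #<= B)%card.

Definition dim_ge (V : lmodType K) (Tk : Type) (k : set Tk) : Prop :=
  exists B : set V, hamel_basis B /\ (k #<= B)%card.

End LinearAlgebra.

Section Shape.
Variable K : numFieldType.

(** continuous linear map defined on the linear subspace S of V
    (a normed space is represented as a linear subspace S of an ambient
     normed space V; for V itself take S = setT). *)
Definition is_clin (V W : normedModType K) (S : set V) (h : V -> W) : Prop :=
  linear_on S h /\ {within S, continuous h}.

Definition is_opnorm (V W : normedModType K) (S : set V) (f : V -> W) (c : K)
  : Prop :=
  0 <= c /\ (forall x, S x -> `|f x| <= c * `|x|) /\
  (forall c', 0 <= c' -> (forall x, S x -> `|f x| <= c' * `|x|) -> c <= c').

(** Inverse systems of normed spaces over a (pre)ordered index type.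
    The bonding maps are total functions; only their values for
    l <= l' matter. *)
Record invsys := InvSys {
  isx : Type;
  ile : isx -> isx -> Prop;
  ispace : isx -> normedModType K;
  ibond : forall l l' : isx, ispace l' -> ispace l
}.
Arguments ile : clear implicits.
Arguments ispace : clear implicits.
Arguments ibond {A} l l' _ : rename.

Definition inv_system (A : invsys) (Tk : Type) (k : set Tk) : Prop :=
  (forall l, ile A l l) /\
  (forall l l' l'', ile A l l' -> ile A l' l'' -> ile A l l'') /\
  (forall l l', exists l'', ile A l l'' /\ ile A l' l'') /\
  (forall l, dim_lt (ispace A l) k) /\
  (forall l l', ile A l l' -> is_clin setT (@ibond A l l')) /\
  (forall l (x : ispace A l), ibond l l x = x) /\
  (forall l l' l'', ile A l l' -> ile A l' l'' ->
     forall x : ispace A l'', ibond l l' (ibond l' l'' x) = ibond l l'' x).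

Record sysmor (A B : invsys) := SysMor {
  smap : isx B -> isx A;
  sfun : forall mu : isx B, ispace A (smap mu) -> ispace B mu
}.
Arguments smap {A B} _ _.
Arguments sfun {A B} _ _ _.

Definition is_sysmor (A B : invsys) (f : sysmor A B) : Prop :=
  (forall mu, is_clin setT (sfun f mu)) /\
  (forall mu mu', ile B mu mu' ->
     exists l, ile A (smap f mu) l /\ ile A (smap f mu') l /\
       forall x : ispace A l,
         sfun f mu (ibond (smap f mu) l x) =
         ibond mu mu' (sfun f mu' (ibond (smap f mu') l x))).

(** Equivalence of morphisms of systems (equality in pro-category). *)
Definition sys_equiv (A B : invsys) (f g : sysmor A B) : Prop :=
  forall mu, exists l, ile A (smap f mu) l /\ ile A (smap g mu) l /\
    forall x : ispace A l,
      sfun f mu (ibond (smap f mu) l x) = sfun g mu (ibond (smap g mu) l x).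

Definition sys_comp (A B C : invsys) (f : sysmor A B) (g : sysmor B C)
  : sysmor A C :=
  @SysMor A C (fun nu => smap f (smap g nu))
    (fun nu x => sfun g nu (sfun f (smap g nu) x)).

Definition sys_id (A : invsys) : sysmor A A :=
  @SysMor A A (fun l => l) (fun l x => x).

Definition pro_iso (A B : invsys) (f : sysmor A B) : Prop :=
  exists g : sysmor B A, is_sysmor g /\
    sys_equiv (sys_comp f g) (sys_id A) /\ sys_equiv (sys_comp g f) (sys_id B).

Definition expansion (V : normedModType K) (S : set V) (A : invsys)
  (p : forall l : isx A, V -> ispace A l) (Tk : Type) (k : set Tk) : Prop :=
  (forall l, is_clin S (p l)) /\
  (forall l l', ile A l l' -> forall x, S x -> ibond l l' (p l' x) = p l x) /\
  (forall (P : normedModType K) (h : V -> P), dim_lt P k -> is_clin S h ->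
     exists l (g : ispace A l -> P), is_clin setT g /\
       forall x, S x -> h x = g (p l x)) /\
  (forall (P : normedModType K) l (g g' : ispace A l -> P), dim_lt P k ->
     is_clin setT g -> is_clin setT g' ->
     (forall x, S x -> g (p l x) = g' (p l x)) ->
     exists l', ile A l l' /\ forall y, g (ibond l l' y) = g' (ibond l l' y)).

(** S_{kappa^-}(e) is an isomorphism of Sh_{kappa^-}(N), where
    e : S -> V is the inclusion of the linear subspace S of V
    (with its induced norm): the unique pro-morphism e with
    e p = q e between expansions p of S and q of V is an isomorphism
    of pro-N_{kappa^-}. (Isomorphy does not depend on the chosen
    expansions.) *)
Definition shape_iso_inclusion (V : normedModType K) (S : set V)
  (Tk : Type) (k : set Tk) : Prop :=
  exists (A B : invsys) (p : forall l : isx A, V -> ispace A l)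
         (q : forall l : isx B, V -> ispace B l) (E : sysmor A B),
    inv_system A k /\ inv_system B k /\
    expansion S p k /\ expansion setT q k /\
    is_sysmor E /\
    (forall mu x, S x -> sfun E mu (p (smap E mu) x) = q mu x) /\
    pro_iso E.

End Shape.

From Pilot Require Import Defs.
From mathcomp Require Import all_boot all_order all_algebra.
From mathcomp Require Import all_classical all_reals all_analysis.
Import numFieldNormedType.Exports.
Import Order.TTheory GRing.Theory Num.Theory.
From mathcomp Require Import complex.
From mathcomp Require Import ring lra.
Local Open Scope classical_set_scope.
Local Open Scope ring_scope.

(* The shape hypothesis forces [Z] to be dense in [X]. A continuous functional
   [phi] on [X] vanishing on [Cl(Z)] takes values in the scalar field, of
   dimension 1 < kappa, so it factors through the expansion of [X]; since
   [S_(kappa^-)(e)] is invertible it then factors through the expansion of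
   [Cl(Z)] at a level where it vanishes, hence [phi = 0]. By Hahn-Banach
   (complexified when F = C) a point outside [Cl(Z)] would be separated from [Z]
   by such a functional, so [Cl(Z) = X]. A bounded linear map from the dense
   subspace [Z] into the Banach space [Y] then extends by continuity, with the
   same bound and hence the same operator norm. *)

Section LinearOn.
Context {K : numFieldType} {V W : lmodType K}.
Implicit Types (S : set V) (h : V -> W).

Lemma linear_on0 {S h} : linear_on S h -> S 0 -> h 0 = 0.
Proof.
by move=> hl S0; have := hl (-1) 0 0 S0 S0; rewrite scaler0 add0r scaleN1r addNr.
Qed.

Lemma linear_onB {S h x y} : linear_on S h -> S x -> S y -> h (x - y) = h x - h y.
Proof.
by move=> hl Sx Sy; have := hl (-1) y x Sy Sx; rewrite !scaleN1r addrC [_ + h x]addrC.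
Qed.

Lemma linear_onZ {S h} a {x} : linear_on S h -> S 0 -> S x -> h (a *: x) = a *: h x.
Proof.
by move=> hl S0 Sx; have := hl a x 0 Sx S0; rewrite !addr0 (linear_on0 hl S0) addr0.
Qed.

Lemma lin_subspaceT : lin_subspace (@setT V).
Proof. by []. Qed.

Lemma lin_subspaceB {S x y} : lin_subspace S -> S x -> S y -> S (x - y).
Proof. by move=> [_ SS] Sx Sy; have := SS (-1) y x Sy Sx; rewrite scaleN1r addrC. Qed.

Lemma lin_subspaceZ {S} a {x} : lin_subspace S -> S x -> S (a *: x).
Proof. by move=> [S0 SS] Sx; have := SS a x 0 Sx S0; rewrite addr0. Qed.

End LinearOn.

Section LipschitzContinuity.
Context {K : numFieldType} {V W : normedModType K}.

Lemma klipschitz_within_continuous {A : set V} {k : K} {g : V -> W} :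
  0 <= k -> k.-lipschitz_A g -> {within A, continuous g}.
Proof.
move=> k0 gk; apply/subspace_continuousP => x Ax.
apply/cvgrPdist_lt => e e0; apply/nbhs_normP.
have k1 : 0 < k + 1 by rewrite ltr_wpDl.
exists (e / (k + 1)) => [|y /= xy Ay]; first by rewrite /= divr_gt0.
apply: le_lt_trans (gk (x, y) (conj Ax Ay)) _.
rewrite ltr_pdivlMr // in xy; apply: le_lt_trans xy.
rewrite /= mulrC; apply: ler_wpM2l => //.
by rewrite lerDl.
Qed.

Lemma klipschitz_continuous {k : K} {g : V -> W} :
  0 <= k -> k.-lipschitz g -> continuous g.
Proof.
by move=> k0 gk; apply/continuous_subspace_setT/(klipschitz_within_continuous k0).
Qed.

Lemma continuous_vanish_closure {Z : set V} {g : V -> W} {x} :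
  continuous g -> (forall z, Z z -> g z = 0) -> closure Z x -> g x = 0.
Proof.
move=> gc g0 clx; apply/eqP; apply: contrapT => /negP gx.
have /cvgrPdist_lt/(_ `|g x|) := gc x; rewrite normr_gt0 => /(_ gx) near_x.
have [z [Zz /=]] := clx _ near_x.
by rewrite (g0 z Zz) subr0 ltxx.
Qed.

Lemma closure_approx {Z : set V} {x} {e : K} :
  closure Z x -> 0 < e -> exists z, Z z /\ `|x - z| < e.
Proof.
move=> clx e0; have : nbhs x [set z | `|x - z| < e] by apply/nbhs_normP; exists e.
by move=> /clx [z [Zz /= xz]]; exists z.
Qed.

Lemma closure_gap {Z : set V} {x} :
  ~ closure Z x -> exists2 d : K, 0 < d & forall z, Z z -> d <= `|x - z|.
Proof.
rewrite /closure /= => /existsNP [B /not_implyP [/nbhs_normP [e e0 Be] nZB]].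
exists e => // z Zz; rewrite (real_leNgt (gtr0_real e0) (normr_real _)).
by apply/negP => ez; apply: nZB; exists z; split => //; exact: Be.
Qed.

End LipschitzContinuity.

Section BoundedLinear.
Context {K : numFieldType} {V W : normedModType K}.
Implicit Types (S : set V) (h : V -> W).

Lemma bounded_linear_on_continuous {S h} (C : K) :
  lin_subspace S -> linear_on S h -> 0 <= C ->
  (forall x, S x -> `|h x| <= C * `|x|) -> {within S, continuous h}.
Proof.
move=> HS hl C0 hC; apply: (klipschitz_within_continuous C0).
move=> [x y] [/= Sx Sy]; rewrite -(linear_onB hl Sx Sy).
exact/hC/lin_subspaceB.
Qed.

Lemma continuous_linear_on_bounded {S h} :
  lin_subspace S -> linear_on S h -> {within S, continuous h} ->
  exists2 C : K, 0 < C & forall x, S x -> `|h x| <= C * `|x|.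
Proof.
move=> HS hl /subspace_continuousP /(_ 0 HS.1).
move=> /cvgrPdist_lt /(_ 1 ltr01) /nbhs_normP [d d0 hd].
exists (2 / d) => [|x Sx]; first by rewrite divr_gt0.
have [->|x0] := eqVneq x 0; first by rewrite (linear_on0 hl HS.1) !normr0 mulr0.
have nx : 0 < `|x| by rewrite normr_gt0.
pose a := d / (2 * `|x|).
have a0 : 0 < a by rewrite divr_gt0 // mulr_gt0.
have ax : a * `|x| = d / 2 by rewrite /a; field; rewrite gt_eqF.
have := hd (a *: x); rewrite /= sub0r normrN normrZ gtr0_norm // ax.
have d2 : d / 2 < d by rewrite ltr_pdivrMr // ltr_pMr // ltr1n.
move=> /(_ d2 (lin_subspaceZ a HS Sx)); rewrite /from_subspace.
rewrite (linear_on0 hl HS.1) sub0r normrN (linear_onZ _ hl HS.1 Sx) normrZ gtr0_norm //.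
rewrite -ltr_pdivlMl // mulr1 => /ltW /le_trans; apply.
by rewrite /a invf_div mulrAC.
Qed.

End BoundedLinear.

Lemma is_clin_comp {K : numFieldType} {U V W : normedModType K}
    {g : V -> W} {f : U -> V} :
  is_clin setT g -> is_clin setT f -> is_clin setT (g \o f).
Proof.
move=> [gl gc] [fl fc]; split; first by move=> a x y _ _ /=; rewrite fl // gl.
have {}gc : continuous g by apply/continuous_subspace_setT.
have {}fc : continuous f by apply/continuous_subspace_setT.
apply: (proj1 (continuous_subspace_setT _)) => x.
exact: continuous_comp (fc x) (gc (f x)).
Qed.

Lemma is_clin0 {K : numFieldType} {V W : normedModType K} :
  is_clin setT (fun _ : V => 0 : W).
Proof.
split; first by move=> a x y _ _; rewrite scaler0 addr0.
by apply: (proj1 (continuous_subspace_setT _)) => x; exact: cvg_cst.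
Qed.

Lemma dim_lt_scalar {K : numFieldType} {Tk : Type} {k : set Tk} :
  infinite_set k -> dim_lt (K^o : normedModType K) k.
Proof.
move=> kinf; exists [set (1 : K^o)]; split; [split|split].
- move=> s c us s1 sum0 v vs.
  have s_1 : s = [:: 1].
    case: s us s1 sum0 vs => [|a [|b s']] //= us s1 _ _.
    + by rewrite (s1 a) ?inE ?eqxx.
    + have a1 := s1 a (mem_head _ _).
      have b1 : b = 1 by apply: s1; rewrite !inE eqxx orbT.
      by move: us; rewrite a1 b1 /= inE eqxx.
  move: sum0 vs; rewrite s_1 big_cons big_nil addr0 inE => /eqP.
  by rewrite -[(c 1)%:A]/(c 1 * 1) mulr1 => /eqP c10 /eqP ->.
- move=> x; exists [:: 1], (fun _ => x); split; first by move=> v; rewrite inE => /eqP ->.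
  by rewrite big_cons big_nil addr0 -[x *: 1]/(x * 1) mulr1.
- apply: (card_le_trans (B := `I_1)).
    by have /card_eqPle[] := @card_set1 _ (1 : K^o).
  apply: (card_le_trans (B := [set: nat])); first exact: card_leT.
  exact/infiniteP.
- by move=> /card_le_finite k1; apply/kinf/k1/finite_set1.
Qed.

(* As E is invertible, q_mu factors as E_mu after a bonding map of the
   expansion of S, and g E_mu vanishes at a late enough level by (E2). *)
Lemma shape_iso_inclusion_vanish {K : numFieldType} {X : normedModType K} {S : set X}
    {Tk : Type} {k : set Tk} :
  shape_iso_inclusion S k ->
  forall (P : normedModType K) (h : X -> P), dim_lt P k -> is_clin setT h ->
  (forall x, S x -> h x = 0) -> forall x, h x = 0.
Proof.
move=> [A [B [p [q [E [_ [_ [[_ [_ [_ pE2]]] [[_ [qbond [qE1 _]]]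
  [[Eclin _] [Epq [G [[_ Gmor] [_ GE]]]]]]]]]]]]]] P h dP hc hS x.
have [mu [g [gc hg]]] := qE1 P h dP hc.
pose nu := smap E mu; pose Emu := @Defs.sfun _ _ _ E mu.
have gES y : S y -> g (Emu (p nu y)) = 0 by move=> Sy; rewrite /Emu Epq // -hg // hS.
have [l [nul gE0]] :=
  pE2 P nu (g \o Emu) (fun=> 0) dP (is_clin_comp gc (Eclin mu)) is_clin0 gES.
have [m [m1 [m2 GEm]]] := GE mu.
have [m' [m'1 [m'2 Gm']]] := Gmor nu l nul.
rewrite hg // -(qbond _ _ m2) //=; have /= <- := GEm (q m x).
by rewrite (qbond _ _ m1) // -(qbond _ _ m'1) // Gm' /=; exact: gE0.
Qed.

Section HahnBanach.
Context {R : realType} {F : numFieldType} (ofR : {rmorphism R -> F}) {X : lmodType F}.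
Variable p : X -> R.
Hypothesis p_subadd : forall x y, p (x + y) <= p x + p y.
Hypothesis p_homo : forall s x, 0 < s -> p (ofR s *: x) = s * p x.

Definition dominated_linear_graph (G : set (X * R)) : Prop :=
  [/\ (forall x a b, G (x, a) -> G (x, b) -> a = b),
      (forall r x y a b, G (x, a) -> G (y, b) -> G (ofR r *: x + y, r * a + b)) &
      (forall x a, G (x, a) -> a <= p x)].

Lemma dominated_linear_graphZ {G} r {x a} :
  dominated_linear_graph G -> G (0, 0) -> G (x, a) -> G (ofR r *: x, r * a).
Proof. by move=> [_ GL _] G0 Gx; have := GL r x 0 a 0 Gx G0; rewrite !addr0. Qed.

Lemma dominated_linear_graphB {G x y a b} :
  dominated_linear_graph G -> G (x, a) -> G (y, b) -> G (y - x, b - a).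
Proof.
move=> [_ GL _] Gx Gy; have := GL (-1) x y a b Gx Gy.
by rewrite rmorphN1 scaleN1r mulN1r addrC [-a + b]addrC.
Qed.

Lemma dominated_linear_graphD {G x y a b} :
  dominated_linear_graph G -> G (x, a) -> G (y, b) -> G (x + y, a + b).
Proof.
by move=> [_ GL _] Gx Gy; have := GL 1 x y a b Gx Gy; rewrite rmorph1 scale1r mul1r.
Qed.

Lemma dominated_linear_graph_directed (U : set (X * R)) :
  (forall w1 w2, U w1 -> U w2 ->
     exists G, [/\ dominated_linear_graph G, G `<=` U, G w1 & G w2]) ->
  dominated_linear_graph U.
Proof.
move=> Udir; split.
- by move=> x a b Ua Ub; have [G [[Gf _ _] _ Ga Gb]] := Udir _ _ Ua Ub; exact: Gf Ga Gb.
- move=> r x y a b Ua Ub; have [G [[_ GL _] GU Ga Gb]] := Udir _ _ Ua Ub.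
  exact/GU/GL.
- by move=> x a Ua; have [G [[_ _ Gp] _ Ga _]] := Udir _ _ Ua Ua; exact: Gp Ga.
Qed.

Section Adjoin.
Context {H : set (X * R)} {x1 : X}.
Hypotheses (H_dom : dominated_linear_graph H) (H00 : H (0, 0)).

(* The constraints on the value [al] at [x1] that keep the extension
   dominated by [p]: they are compatible by subadditivity of [p]. *)
Lemma adjoin_value_exists : exists al,
  (forall y a, H (y, a) -> a - p (y - x1) <= al) /\
  (forall y a, H (y, a) -> al <= p (y + x1) - a).
Proof.
have [_ _ Hp] := H_dom.
have compat y1 a1 y2 a2 : H (y1, a1) -> H (y2, a2) ->
    a1 - p (y1 - x1) <= p (y2 + x1) - a2.
  move=> H1 H2; have := Hp _ _ (dominated_linear_graphD H_dom H1 H2).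
  have := p_subadd (y1 - x1) (y2 + x1).
  rewrite [y2 + x1]addrC addrA subrK; lra.
pose lower := [set t | exists y a, H (y, a) /\ t = a - p (y - x1)].
have lower_ub : has_ubound lower.
  by exists (p (0 + x1) - 0) => t [y [a [Hy ->]]]; exact: compat.
have lower0 : lower !=set0 by exists (0 - p (0 - x1)), 0, 0.
exists (sup lower); split.
- by move=> y a Hy; apply: ub_le_sup => //; exists y, a.
- by move=> y a Hy; apply: ge_sup => // t [y' [a' [Hy' ->]]]; exact: compat.
Qed.

Definition graph_adjoin (al : R) : set (X * R) :=
  [set w | exists y a t, H (y, a) /\ w = (y + ofR t *: x1, a + t * al)].

Lemma graph_adjoin_functional al : ~ (exists a, H (x1, a)) ->
  forall x a b, graph_adjoin al (x, a) -> graph_adjoin al (x, b) -> a = b.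
Proof.
have [Hf _ _] := H_dom.
move=> nx1 x a b [y [a' [t [Hy [-> ->]]]]] [y' [b' [t' [Hy' []]]]] yy' ->.
have [tt'|tt'] := eqVneq t t'.
  by subst t'; move/addIr: yy' => yy'; subst y'; rewrite (Hf _ _ _ Hy Hy').
exfalso; apply: nx1; exists ((t - t')^-1 * (b' - a')).
have := dominated_linear_graphZ (t - t')^-1 H_dom H00
  (dominated_linear_graphB H_dom Hy Hy').
have -> : y' - y = ofR (t - t') *: x1.
  have -> : y' = y + ofR t *: x1 - ofR t' *: x1 by rewrite yy' addrK.
  by rewrite rmorphB scalerBl addrAC [y + _]addrC addrK.
by rewrite scalerA -rmorphM mulVf ?subr_eq0 // rmorph1 scale1r.
Qed.

Lemma graph_adjoin_linear al r x y a b :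
  graph_adjoin al (x, a) -> graph_adjoin al (y, b) ->
  graph_adjoin al (ofR r *: x + y, r * a + b).
Proof.
have [_ HL _] := H_dom.
move=> [y1 [a1 [t1 [H1 [-> ->]]]]] [y2 [a2 [t2 [H2 [-> ->]]]]].
exists (ofR r *: y1 + y2), (r * a1 + a2), (r * t1 + t2); split; first exact: HL.
congr (_, _); last by ring.
rewrite rmorphD rmorphM scalerDl scalerDr scalerA !addrA; congr (_ + _).
by rewrite addrAC.
Qed.

Lemma graph_adjoin_dominated al :
  (forall y a, H (y, a) -> a - p (y - x1) <= al) ->
  (forall y a, H (y, a) -> al <= p (y + x1) - a) ->
  forall x a, graph_adjoin al (x, a) -> a <= p x.
Proof.
have [_ _ Hp] := H_dom.
move=> al_ge al_le x a [y [a' [t [Hy [-> ->]]]]].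
have [t0|t0|->] := ltgtP t 0; last first.
- by rewrite mul0r addr0 rmorph0 scale0r addr0; exact: Hp.
- have := al_le _ _ (dominated_linear_graphZ t^-1 H_dom H00 Hy).
  have := p_homo t (ofR t^-1 *: y + x1) t0.
  rewrite scalerDr scalerA -rmorphM mulfV ?gt_eqF // rmorph1 scale1r => ->.
  move=> /(ler_wpM2l (ltW t0)); rewrite mulrBr mulrA mulfV ?gt_eqF // mul1r.
  lra.
- have s0 : 0 < - t by rewrite oppr_gt0.
  have := al_ge _ _ (dominated_linear_graphZ (- t)^-1 H_dom H00 Hy).
  have := p_homo (- t) (ofR (- t)^-1 *: y - x1) s0.
  rewrite scalerDr scalerA -rmorphM mulfV ?gt_eqF // rmorph1 scale1r.
  rewrite scalerN rmorphN scaleNr opprK => ->.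
  move=> /(ler_wpM2l (ltW s0)); rewrite mulrBr mulrA mulfV ?gt_eqF // mul1r.
  lra.
Qed.

Lemma dominated_linear_graph_extend : ~ (exists a, H (x1, a)) ->
  exists H', [/\ dominated_linear_graph H', H `<=` H' & exists a, H' (x1, a)].
Proof.
move=> nx1; have [al [al_ge al_le]] := adjoin_value_exists.
exists (graph_adjoin al); split.
- split; [exact: graph_adjoin_functional | exact: graph_adjoin_linear |].
  exact: graph_adjoin_dominated.
- move=> [y a] Hy; exists y, a, 0; split => //.
  by rewrite rmorph0 scale0r addr0 mul0r addr0.
- exists al, 0, 0, 1; split => //.
  by rewrite rmorph1 scale1r add0r mul1r add0r.
Qed.

End Adjoin.

Lemma hahn_banach {G0 : set (X * R)} : dominated_linear_graph G0 -> G0 (0, 0) ->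
  exists u : X -> R, [/\ forall r x y, u (ofR r *: x + y) = r * u x + u y,
    forall x, u x <= p x & forall x a, G0 (x, a) -> u x = a].
Proof.
move=> G0_dom G00.
pose P G := dominated_linear_graph (G `|` G0).
have [A [PA Amax]] : exists A, P A /\ forall B, A `<` B -> ~ P B.
  apply: Zorn_bigcup => C CP Ctot; apply: dominated_linear_graph_directed.
  have CU G : C G -> G `|` G0 `<=` \bigcup_(G in C) G `|` G0.
    by move=> CG w [Gw|G0w]; [left; exists G|right].
  move=> w1 w2 [[G1 CG1 G1w]|G0w1] [[G2 CG2 G2w]|G0w2].
  - have [G12|G21] := Ctot _ _ CG1 CG2.
    + by exists (G2 `|` G0); split; [exact: CP|exact: CU|left; exact: G12|left].
    + by exists (G1 `|` G0); split; [exact: CP|exact: CU|left|left; exact: G21].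
  - by exists (G1 `|` G0); split; [exact: CP|exact: CU|left|right].
  - by exists (G2 `|` G0); split; [exact: CP|exact: CU|right|left].
  - by exists G0; split => // w ?; right.
have [Hf HL Hp] := PA.
have total x1 : exists a, (A `|` G0) (x1, a).
  apply: contrapT => nx1.
  have [H' [H'_dom AH' [al H'x1]]] :=
    dominated_linear_graph_extend PA (or_intror G00) nx1.
  apply: (Amax H'); last by rewrite /P setUidl // => w G0w; apply: AH'; right.
  split; first by move=> w Aw; apply: AH'; left.
  by move=> H'A; apply: nx1; exists al; left; exact: H'A.
have [u uA] := choice total.
exists u; split.
- by move=> r x y; apply: (Hf _ _ _ (uA _)); apply: HL.
- by move=> x; apply: Hp.
- by move=> x a G0x; apply: (Hf _ _ _ (uA _)); right.
Qed.

End HahnBanach.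

(* Scalar fields containing the reals, such as [R] and [R[i]]. *)
Section RealScalars.
Context {R : realType} {F : numFieldType} (ofR : {rmorphism R -> F}) (toR : F -> R).
Hypothesis ofRK : {in Num.real, cancel toR ofR}.
Hypothesis ler_ofR : {mono ofR : a b / a <= b}.

Lemma ofR_inj : injective ofR.
Proof. by move=> a b ab; apply/eqP; rewrite eq_le -!ler_ofR ab lexx. Qed.

Lemma ltr_ofR : {mono ofR : a b / a < b}.
Proof. by move=> a b; rewrite !lt_def ler_ofR (inj_eq ofR_inj). Qed.

Lemma ofR_real r : ofR r \is Num.real.
Proof. by rewrite realE -(rmorph0 ofR) !ler_ofR le_total. Qed.

Lemma normr_ofR r : `|ofR r| = ofR `|r|.
Proof.
have [r0|r0] := lerP 0 r; first by rewrite !ger0_norm // -(rmorph0 ofR) ler_ofR.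
by rewrite !ltr0_norm ?rmorphN // -(rmorph0 ofR) ltr_ofR.
Qed.

Lemma toR_normK (V : normedModType F) (v : V) : ofR (toR `|v|) = `|v|.
Proof. exact/ofRK/ger0_real. Qed.

Lemma toR_gt0 (c : F) : 0 < c -> 0 < toR c.
Proof. by move=> c0; rewrite -ltr_ofR rmorph0 ofRK // gtr0_real. Qed.

Section Separation.
Context {X : normedModType F} {Z : set X} {x0 : X} {d : F}.
Hypotheses (HZ : lin_subspace Z) (d0 : 0 < d) (x0_gap : forall z, Z z -> d <= `|x0 - z|).

Let p (x : X) := toR `|x| / toR d.

Lemma line_graph_dominated :
  dominated_linear_graph ofR p [set w | exists z t, Z z /\ w = (z + ofR t *: x0, t)].
Proof.
have x0Z : ~ Z x0.
  by move=> /x0_gap; rewrite subrr normr0 => /(lt_le_trans d0); rewrite ltxx.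
split.
- move=> x a b [z [t [Zz [-> ->]]]] [z' [t' [Zz' []]]] zz' ->.
  have [//|tt'] := eqVneq t t'; exfalso; apply: x0Z.
  have -> : x0 = ofR (t - t')^-1 *: (z' - z).
    have -> : z' = z + ofR t *: x0 - ofR t' *: x0 by rewrite zz' addrK.
    rewrite addrAC [z + _]addrC addrK -scalerBl -rmorphB.
    by rewrite scalerA -rmorphM mulVf ?subr_eq0 // rmorph1 scale1r.
  exact/(lin_subspaceZ _ HZ)/lin_subspaceB.
- move=> r x y a b [z [t [Zz [-> ->]]]] [z' [t' [Zz' [-> ->]]]].
  exists (ofR r *: z + z'), (r * t + t'); split; first exact: HZ.2.
  congr (_, _); rewrite rmorphD rmorphM scalerDl scalerDr scalerA !addrA.
  by congr (_ + _); rewrite addrAC.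
- move=> x a [z [t [Zz [-> ->]]]].
  rewrite /p ler_pdivlMr ?toR_gt0 // -ler_ofR rmorphM toR_normK ofRK ?gtr0_real //.
  have [->|t0] := eqVneq t 0; first by rewrite rmorph0 mul0r.
  (* |z + t x0| = |t| |x0 - (-z/t)| >= |t| d *)
  have ofRt0 : ofR t != 0 by rewrite -(rmorph0 ofR) (inj_eq ofR_inj).
  apply: (le_trans (y := `|ofR t| * d)).
    by apply: ler_wpM2r; [exact: ltW | exact: real_ler_norm (ofR_real t)].
  have := x0_gap _ (lin_subspaceZ (- (ofR t)^-1) HZ Zz).
  move=> /(ler_wpM2l (normr_ge0 (ofR t))) /le_trans; apply.
  by rewrite -normrZ scalerBr scaleNr scalerN opprK scalerA mulfV // scale1r addrC.
Qed.

End Separation.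

Lemma closure_separating_functional {X : normedModType F} {Z : set X} {x0 : X} :
  lin_subspace Z -> ~ closure Z x0 ->
  exists u : X -> R, [/\ forall r x y, u (ofR r *: x + y) = r * u x + u y,
    forall z, Z z -> u z = 0, u x0 = 1 &
    exists2 M : F, 0 <= M & forall x, `|ofR (u x)| <= M * `|x|].
Proof.
move=> HZ /closure_gap [d d0 x0_gap].
pose p (x : X) := toR `|x| / toR d.
have p_subadd x y : p (x + y) <= p x + p y.
  rewrite /p -mulrDl ler_pM2r ?invr_gt0 ?toR_gt0 //.
  by rewrite -ler_ofR rmorphD !toR_normK ler_normD.
have p_homo s x : 0 < s -> p (ofR s *: x) = s * p x.
  move=> s0; rewrite /p mulrA; congr (_ / _); apply: ofR_inj.
  by rewrite toR_normK rmorphM toR_normK normrZ normr_ofR gtr0_norm.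
have G00 : [set w | exists z t, Z z /\ w = (z + ofR t *: x0, t)] (0, 0).
  by exists 0, 0; rewrite rmorph0 scale0r addr0; split => //; exact: HZ.1.
have [u [u_lin u_le u_ext]] :=
  hahn_banach ofR p p_subadd p_homo (line_graph_dominated HZ d0 x0_gap) G00.
have u0 : u 0 = 0 by rewrite (u_ext 0 0 G00).
have uN x : u (- x) = - u x.
  by have := u_lin (-1) x 0; rewrite addr0 u0 addr0 rmorphN1 scaleN1r mulN1r.
exists u; split => //.
- move=> z Zz; apply: (u_ext z 0); exists z, 0; split => //.
  by rewrite rmorph0 scale0r addr0.
- apply: (u_ext x0 1); exists 0, 1; split; first exact: HZ.1.
  by rewrite rmorph1 scale1r add0r.
- exists d^-1 => [|x]; first by rewrite invr_ge0 ltW.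
  have : `|u x| <= p x.
    have pN : p (- x) = p x by rewrite /p normrN.
    by rewrite ler_norml u_le andbT lerNl -uN -pN u_le.
  rewrite normr_ofR -ler_ofR => /le_trans; apply.
  rewrite /p rmorphM toR_normK mulrC; apply: ler_wpM2r => //.
  by rewrite rmorphV ?unitfE ?gt_eqF ?toR_gt0 // ofRK // gtr0_real.
Qed.

(* [F] need not have suprema: the operator norm is the supremum, taken in [R],
   of the ratios [|h x| / |x|]. *)
Lemma opnorm_exists {V W : normedModType F} {S : set V} {h : V -> W} {C : F} :
  0 <= C -> (forall x, S x -> `|h x| <= C * `|x|) -> exists c, is_opnorm S h c.
Proof.
move=> C0 hC.
have nx_gt0 (x : V) : x != 0 -> 0 < toR `|x| by move=> x0; rewrite toR_gt0 ?normr_gt0.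
have ratio_le (x : V) (b : F) : 0 <= b -> x != 0 ->
    (toR `|h x| / toR `|x| <= toR b) = (`|h x| <= b * `|x|).
  move=> b0 x0; rewrite ler_pdivrMr ?nx_gt0 // -ler_ofR rmorphM !toR_normK.
  by rewrite ofRK // ger0_real.
pose T := [set r : R | r = 0 \/ exists2 x, S x & x != 0 /\ r = toR `|h x| / toR `|x|].
have T_ub (b : F) : 0 <= b -> (forall x, S x -> `|h x| <= b * `|x|) -> ubound T (toR b).
  move=> b0 hb r [->|[x Sx [x0 ->]]]; last by rewrite ratio_le // hb.
  by rewrite -ler_ofR rmorph0 ofRK // ger0_real.
have T_sup : has_sup T by split; [exists 0; left | exists (toR C); exact: T_ub].
exists (ofR (sup T)); split; [|split].
- by rewrite -(rmorph0 ofR) ler_ofR; apply: ub_le_sup => //; [case: T_sup | left].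
- move=> x Sx; have [x0|x0] := eqVneq x 0.
    by move: (hC x Sx); rewrite x0 !normr0 !mulr0.
  have : toR `|h x| / toR `|x| <= sup T.
    by apply: ub_le_sup; [case: T_sup | right; exists x].
  by rewrite ler_pdivrMr ?nx_gt0 // -ler_ofR rmorphM !toR_normK.
- move=> c' c'0 hc'; rewrite -[c' in _ <= c']ofRK ?ger0_real // ler_ofR.
  by apply: ge_sup; [case: T_sup | exact: T_ub].
Qed.

End RealScalars.

Definition closure_separated {F : numFieldType} {X : normedModType F} (Z : set X)
    : Prop :=
  forall x0, ~ closure Z x0 -> exists phi : X -> F^o,
    [/\ is_clin setT phi, forall z, Z z -> phi z = 0 & phi x0 != 0].

Lemma real_closure_separated (R : realType) (X : normedModType R) (Z : set X) :
  lin_subspace Z -> closure_separated Z.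
Proof.
move=> HZ x0 ncl.
have [u [u_lin uZ ux0 [M M0 uM]]] :=
  closure_separating_functional (idfun : {rmorphism R -> R}) id (fun _ _ => erefl)
    (fun _ _ => erefl) HZ ncl.
have u_lin' : linear_on setT (u : X -> R^o) by move=> a x y _ _; exact: u_lin.
exists (u : X -> R^o); split => //; last by rewrite ux0 oner_neq0.
split => //; apply: (bounded_linear_on_continuous M lin_subspaceT u_lin' M0).
by move=> x _; exact: uM.
Qed.

Section Complexification.
Context {R : realType} {X : normedModType R[i]}.
Local Open Scope complex_scope.
Local Notation i := ('i%C : R[i]).

Definition complexify (u : X -> R) (x : X) : R[i] := (u x)%:C - i * (u (i *: x))%:C.

Variable u : X -> R.
Hypothesis u_lin : forall r x y, u (r%:C *: x + y) = r * u x + u y.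

Lemma complexify_linear a x y :
  complexify u (a *: x + y) = a * complexify u x + complexify u y.
Proof.
have u0 : u 0 = 0 by have := u_lin (-1) 0 0; rewrite scaler0 addr0 mulN1r addNr.
have uD x1 x2 : u (x1 + x2) = u x1 + u x2.
  by have := u_lin 1 x1 x2; rewrite rmorph1 scale1r mul1r.
have uR r x1 : u (r%:C *: x1) = r * u x1.
  by have := u_lin r x1 0; rewrite !addr0 u0 addr0.
have uN x1 : u (- x1) = - u x1.
  by have := uR (-1) x1; rewrite rmorphN1 scaleN1r mulN1r.
have ii : i * i = -1 :> R[i] by rewrite -expr2 sqr_i.
have cD x1 x2 : complexify u (x1 + x2) = complexify u x1 + complexify u x2.
  by rewrite /complexify scalerDr !uD !rmorphD mulrDr opprD addrACA.
have cR r x1 : complexify u (r%:C *: x1) = r%:C * complexify u x1.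
  rewrite /complexify; have -> : i *: (r%:C *: x1) = r%:C *: (i *: x1).
    by rewrite !scalerA mulrC.
  by rewrite !uR !rmorphM mulrBr mulrCA.
have cI x1 : complexify u (i *: x1) = i * complexify u x1.
  rewrite /complexify scalerA ii scaleN1r uN rmorphN mulrN opprK.
  by rewrite mulrBr mulrA ii mulN1r opprK addrC.
rewrite cD; congr (_ + _).
rewrite [a]complexE scalerDl cD cR [i * _]mulrC -scalerA cR cI.
by rewrite mulrDl; congr (_ + _); rewrite mulrA [(Im a)%:C * i]mulrC.
Qed.

Lemma normr_i : `|i| = 1 :> R[i].
Proof. by rewrite normc_def /= expr0n expr1n add0r sqrtr1. Qed.

Lemma complexify_bounded (M : R[i]) :
  (forall x, `|(u x)%:C| <= M * `|x|) -> forall x, `|complexify u x| <= (M + M) * `|x|.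
Proof.
move=> uM x; apply: le_trans (ler_normB _ _) _.
by rewrite mulrDl lerD // normrM normr_i mul1r (le_trans (uM _)) // normrZ normr_i mul1r.
Qed.

End Complexification.

Lemma ReK_real (R : realType) : {in Num.real, cancel (@complex.Re R) (real_complex R)}.
Proof.
move=> [a b]; rewrite realE !lecE /= => /orP[/andP[/eqP b0 _]|/andP[/eqP b0 _]].
- by rewrite b0.
- by rewrite -b0.
Qed.

Lemma complex_closure_separated (R : realType) (X : normedModType R[i]) (Z : set X) :
  lin_subspace Z -> closure_separated Z.
Proof.
move=> HZ x0 ncl.
have [u [u_lin uZ ux0 [M M0 uM]]] := closure_separating_functional (real_complex R)
  (@complex.Re R) (@ReK_real R) (@lecR R) HZ ncl.
have cu_lin : linear_on setT (complexify u : X -> R[i]^o).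
  by move=> a x y _ _; rewrite (complexify_linear u u_lin).
exists (complexify u : X -> R[i]^o); split.
- split => //; apply: (bounded_linear_on_continuous (M + M) lin_subspaceT cu_lin).
    by rewrite addr_ge0.
  by move=> x _; exact: complexify_bounded.
- move=> z Zz; rewrite /complexify uZ // uZ; last exact: lin_subspaceZ.
  by rewrite rmorph0 mulr0 subr0.
- rewrite /complexify ux0 rmorph1; apply/negP => /eqP /(congr1 (@complex.Re R)) /=.
  by rewrite mul0r mulr0 subrr subr0 => /eqP; rewrite oner_eq0.
Qed.

Section ClosureLimit.
Context {F : numFieldType} {X : normedModType F} {Y : completeNormedModType F}.
Context {Z : set X} {f : X -> Y} {C : F}.
Hypotheses (HZ : lin_subspace Z) (f_lin : linear_on Z f) (C0 : 0 < C)
  (fC : forall z, Z z -> `|f z| <= C * `|z|).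

Lemma linear_on_dist {z1 z2} : Z z1 -> Z z2 -> `|f z1 - f z2| <= C * `|z1 - z2|.
Proof. by move=> Z1 Z2; rewrite -(linear_onB f_lin Z1 Z2); exact/fC/lin_subspaceB. Qed.

Lemma cauchy_within_closure {x} : closure Z x -> cauchy (f @ within Z (nbhs x)).
Proof.
move=> clx; apply: cauchy_exP => e e0.
have d0 : 0 < e / C / 2 by rewrite !divr_gt0.
have [z0 [Zz0 xz0]] := closure_approx clx d0.
exists (f z0); apply/nbhs_normP; exists (e / C / 2) => //= z xz Zz.
rewrite -ball_normE /=; apply: le_lt_trans (linear_on_dist Zz0 Zz) _.
rewrite mulrC -ltr_pdivlMr //; apply: le_lt_trans (ler_distD x _ _) _.
by rewrite [e / C]splitr ltrD // distrC.
Qed.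

Lemma closure_limit {x} : closure Z x ->
  exists y, forall z, Z z -> `|y - f z| <= C * `|x - z|.
Proof.
move=> clx; have PF : ProperFilter (within Z (nbhs x)) := within_nbhs_proper clx.
have := @cauchy_cvg Y _ (fmap_proper_filter f PF) (cauchy_within_closure clx).
set y := lim _ => fy; exists y => z Zz; apply/ler_addgt0Pr => e e0.
have near_y : within Z (nbhs x) [set t | `|y - f t| < e / 2].
  by move: fy => /cvgrPdist_lt; apply; rewrite divr_gt0.
have near_x : within Z (nbhs x) [set t | `|x - t| < e / 2 / C].
  by apply/nbhs_normP; exists (e / 2 / C) => /=; [rewrite !divr_gt0 | move=> t xt _].
have [t [[yt Zt] xt]] := filter_ex (filterI (filterI near_y (withinT _ _)) near_x).
have Cxt : C * `|x - t| <= e / 2 by rewrite ltW // mulrC -ltr_pdivlMr.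
have Ctz : C * `|t - z| <= C * `|x - t| + C * `|x - z|.
  rewrite -mulrDr; apply: ler_wpM2l; first exact: ltW.
  by rewrite (distrC x t); exact: ler_distD.
apply: le_trans (ler_distD (f t) _ _) _.
apply: le_trans (lerD (ltW yt) (le_trans (linear_on_dist Zt Zz) Ctz)) _.
by rewrite addrA [_ + e]addrC lerD2r {2}(splitr e) lerD2l.
Qed.

End ClosureLimit.

Lemma subrACA (V : zmodType) (u1 v1 u2 v2 : V) :
  (u1 - v1) - (u2 - v2) = (u1 - u2) - (v1 - v2).
Proof. by rewrite !opprB addrACA [- v1 - u2]addrC addrACA. Qed.

Section Approximant.
Context {F : numFieldType} {X Y : normedModType F}.
Context {Z : set X} {f : X -> Y} {C : F} {fb : X -> Y}.
Hypotheses (HZ : lin_subspace Z) (f_lin : linear_on Z f) (C0 : 0 < C)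
  (Z_dense : forall x, closure Z x)
  (fb_near : forall x z, Z z -> `|fb x - f z| <= C * `|x - z|).

Lemma approximant_eq z : Z z -> fb z = f z.
Proof.
move=> Zz; apply/eqP; rewrite -subr_eq0 -normr_le0.
by have := fb_near z z Zz; rewrite subrr normr0 mulr0.
Qed.

Lemma approximant_lipschitz : C.-lipschitz fb.
Proof.
move=> [x y] _ /=; apply/ler_addgt0Pr => e e0.
have [z [Zz yz]] := closure_approx (Z_dense y) (divr_gt0 e0 (mulr_gt0 (ltr0n _ 2) C0)).
have Cyz : C * `|y - z| *+ 2 <= e.
  rewrite -mulr_natl mulrA ltW // -ltr_pdivlMl ?mulr_gt0 //.
  by rewrite mulrC.
apply: le_trans (ler_distD (f z) _ _) _.
rewrite [`|f z - _|]distrC.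
apply: le_trans (lerD (fb_near x z Zz) (fb_near y z Zz)) _.
have xz : `|x - z| <= `|x - y| + `|y - z| by exact: ler_distD.
apply: le_trans (lerD (ler_wpM2l (ltW C0) xz) (lexx _)) _.
by rewrite mulrDr -addrA lerD2l -mulr2n.
Qed.

(* Both sides are Lipschitz in [x] and in [y] and agree for [x] and [y] in [Z];
   density extends the identity one variable at a time. *)
Lemma approximant_linear a x y : fb (a *: x + y) = a *: fb x + fb y.
Proof.
have fb_lip x1 x2 : `|fb x1 - fb x2| <= C * `|x1 - x2|.
  exact: approximant_lipschitz (x1, x2) (conj I I).
have vanish (g : X -> Y) (k : F) : 0 <= k -> k.-lipschitz g ->
    (forall z, Z z -> g z = 0) -> forall x, g x = 0.
  move=> k0 gk gZ x'.
  exact: continuous_vanish_closure (klipschitz_continuous k0 gk) gZ (Z_dense x').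
pose g y x := fb (a *: x + y) - (a *: fb x + fb y).
have gZ y' : Z y' -> forall x', g y' x' = 0.
  move=> Zy'; apply: (vanish _ (`|a| * C + `|a| * C)).
  - by rewrite addr_ge0 // mulr_ge0 // ltW.
  - move=> [x1 x2] _ /=; rewrite /g subrACA (addrC (a *: fb x2)) addrKA -scalerBr.
    apply: le_trans (ler_normB _ _) _; rewrite mulrDl lerD //.
      apply: le_trans (fb_lip _ _) _.
      by rewrite (addrC (a *: x2)) addrKA -scalerBr normrZ mulrCA mulrA.
    by rewrite normrZ -mulrA ler_wpM2l.
  - move=> z Zz; rewrite /g !approximant_eq //; last exact: HZ.2.
    by rewrite f_lin // subrr.
apply/eqP; rewrite -subr_eq0; apply/eqP; move: y.
apply: (vanish (g ^~ x) (C + C)); first by rewrite addr_ge0 // ltW.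
- move=> [y1 y2] _ /=; rewrite /g subrACA (addrC (a *: fb x) (fb y1)) addrKA.
  apply: le_trans (ler_normB _ _) _; rewrite mulrDl lerD //.
  apply: le_trans (fb_lip _ _) _.
  by rewrite (addrC (a *: x) y1) addrKA.
- by move=> z Zz; exact: gZ.
Qed.

Lemma approximant_bound c : 0 <= c -> (forall z, Z z -> `|f z| <= c * `|z|) ->
  forall x, `|fb x| <= c * `|x|.
Proof.
move=> c0 fc x; apply/ler_addgt0Pr => e e0.
have Cc : 0 < C + c by rewrite ltr_pwDl.
have [z [Zz xz]] := closure_approx (Z_dense x) (divr_gt0 e0 Cc).
have zx : `|z| <= `|x| + `|x - z|.
  by have := ler_normD x (z - x); rewrite addrC subrK distrC.
have : `|fb x| <= C * `|x - z| + c * (`|x| + `|x - z|).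
  rewrite -[fb x](subrK (f z)); apply: le_trans (ler_normD _ _) _.
  by apply: lerD; [exact: fb_near | exact: le_trans (fc z Zz) (ler_wpM2l c0 zx)].
move/le_trans; apply.
rewrite mulrDr addrCA -mulrDl lerD2l mulrC -ler_pdivlMr //.
exact: ltW.
Qed.

End Approximant.

Lemma dense_extension {F : numFieldType} {X : normedModType F}
    {Y : completeNormedModType F} {Z : set X} {f : X -> Y} :
  lin_subspace Z -> (forall x, closure Z x) -> is_clin Z f ->
  exists fb : X -> Y, [/\ is_clin setT fb, forall z, Z z -> fb z = f z &
    forall c, is_opnorm Z f c -> is_opnorm setT fb c].
Proof.
move=> HZ Z_dense [f_lin f_cont].
have [C C0 fC] := continuous_linear_on_bounded HZ f_lin f_cont.
have [fb fb_near] := choice (fun x => closure_limit HZ f_lin C0 fC (Z_dense x)).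
have fb_lin : linear_on setT fb.
  by move=> a x y _ _; exact: approximant_linear HZ f_lin C0 Z_dense fb_near a x y.
have fbZ := approximant_eq fb_near.
exists fb; split => //.
- split => //; apply: klipschitz_within_continuous (ltW C0) _.
  by move=> [x y] _; exact: approximant_lipschitz C0 Z_dense fb_near (x, y) (conj I I).
- move=> c [c0 [fc c_min]]; split => //; split.
    by move=> x _; exact: approximant_bound C0 Z_dense fb_near c c0 fc x.
  by move=> c' c'0 fbc'; apply: c_min => // z Zz; rewrite -fbZ //; exact: fbc'.
Qed.

Lemma shape_iso_dense {F : numFieldType} {X : normedModType F} {Z : set X}
    {Tk : Type} {k : set Tk} :
  infinite_set k -> shape_iso_inclusion (closure Z) k -> closure_separated Z ->
  forall x, closure Z x.
Proof.
move=> kinf Zshape Zsep x; apply: contrapT => ncl.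
have [phi [phi_clin phiZ /eqP]] := Zsep x ncl; apply.
have phi_cont : continuous phi by apply/continuous_subspace_setT; case: phi_clin.
have phi_cl y : closure Z y -> phi y = 0.
  exact: continuous_vanish_closure phi_cont phiZ.
exact: shape_iso_inclusion_vanish Zshape _ _ (dim_lt_scalar kinf) phi_clin phi_cl x.
Qed.

Theorem theorem3 (R : realType) (F : numFieldType)
  (HF : F = (R : numFieldType) \/ F = (R[i] : numFieldType))
  (Tk : Type) (k : set Tk) (Hk : infinite_set k)
  (X : normedModType F) (HX : dim_ge X k)
  (Z : set X) (HZ : lin_subspace Z)
  (Hshape : shape_iso_inclusion (closure Z) k) :
  forall (Y : completeNormedModType F), dim_lt Y k ->
  forall f : X -> Y, is_clin Z f ->
  exists fb : X -> Y,
    is_clin setT fb /\ (forall z, Z z -> fb z = f z) /\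
    exists c : F, is_opnorm Z f c /\ is_opnorm setT fb c.
Proof.
move=> Y _ f f_clin.
have [C C0 fC] := continuous_linear_on_bounded HZ f_clin.1 f_clin.2.
have [Zsep [c fc]] : closure_separated Z /\ exists c, is_opnorm Z f c.
  case: HF => HF; subst F; split.
  - exact: real_closure_separated.
  - exact: (opnorm_exists (idfun : {rmorphism R -> R}) id (fun _ _ => erefl)
      (fun _ _ => erefl) (ltW C0) fC).
  - exact: complex_closure_separated.
  - exact: (opnorm_exists (real_complex R) (@complex.Re R) (@ReK_real R) (@lecR R)
      (ltW C0) fC).
have [fb [fb_clin fbZ fb_opnorm]] :=
  dense_extension HZ (shape_iso_dense Hk Hshape Zsep) f_clin.
by exists fb; split => //; split => //; exists c; split => //; exact: fb_opnorm.
Qed.
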